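(* Let $n\ge2$, let $\mathcal T_n$ be the set of rooted trees with vertices labeled $1,\dots,n$, and let $\sigma_1,\dots,\sigma_{n-1}:\mathcal T_n\to\mathcal T_n$ be the maps defined in the context. Let $\delta_n=\sigma_1\sigma_2\cdots\sigma_{n-1}$ (apply $\sigma_{n-1}$ first). Then for every $T\in\mathcal T_n$, $\delta_nT=T^+$, where $T^+$ is the tree obtained from $T$ by increasing every label by $1$ modulo $n$ (so label $n$ becomes $1$). In particular $\delta_n\sigma_iT=\sigma_{i+1}\delta_nT$ for all $T$ and all $1\le i\le n-2$.
   Context: Write $v_i$ for the vertex labeled $i$ of $T\in\mathcal T_n$. Definition of $\sigma_iT$ for $1\le i\le n-1$: if $v_{i+1}$ is the root of $T$, then $\sigma_iT$ is $T$ with labels $i$ and $i+1$ interchanged. Otherwise form $T_+$ by adding a new vertex $v_0$ as parent of the root, and write $a\to b$ if $a$ is the parent of $b$ in $T_+$; then: (0) if neither of $v_i,v_{i+1}$ is the parent of the other and they do not have the same parent, $\sigma_iT$ is $T$ with labels $i,i+1$ interchanged; (1) if $v_k\to v_i\to v_{i+1}$, then $\sigma_iT$ has $v_k\to v_{i+1}\to v_i$, and all other parent-child relations (in particular the other children of $v_i$ and of $v_{i+1}$) are unchanged; (2) if $v_k\to v_{i+1}\to v_i$, then in $\sigma_iT$ both $v_i$ and $v_{i+1}$ are children of $v_k$, the sets of other children of $v_i$ and of $v_{i+1}$ are interchanged, and all other relations are unchanged; (3) if $v_i,v_{i+1}$ have the same parent $v_k$, then first the sets of children of $v_i$ and $v_{i+1}$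 are interchanged and then $v_{i+1}$ is made a child of $v_i$, so $v_k\to v_i\to v_{i+1}$. In cases (1)-(3), deleting $v_0$ gives $\sigma_iT\in\mathcal T_n$ whose root is the child of $v_0$. *)

From mathcomp Require Import all_boot.
Set Implicit Arguments. Unset Strict Implicit. Unset Printing Implicit Defensive.

(* Vertex j : 'I_n carries the label j+1
   (labels 1..n).  A tree is given by its parent function in T_+ :
   p x = Some y  means y is the parent of x,
   p x = None    means the parent of x is the extra vertex v_0, i.e. x is the root. *)
Definition ptree (n : nat) := {ffun 'I_n -> option 'I_n}.

Definition is_rooted_tree (n : nat) (p : ptree n) : Prop :=
  #|[set x | p x == None]| = 1 /\
  (forall x : 'I_n, exists k, iter k (fun o => obind p o) (Some x) = None).

Definition swapv (n : nat) (a b : 'I_n) (x : 'I_n) : 'I_n :=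
  if x == a then b else if x == b then a else x.

(* the tree with labels permuted by the involution f *)
Definition relabel (n : nat) (f : 'I_n -> 'I_n) (p : ptree n) : ptree n :=
  [ffun x => omap f (p (f x))].

(* sigma_i (1 <= i <= n-1) acting on labels i, i+1, i.e. on the vertices
   a := ordinal (i-1) and b := ordinal i.  (Identity if i is out of range.) *)
Definition sigma (n : nat) (i : nat) (p : ptree n) : ptree n :=
  match (insub i.-1 : option 'I_n), (insub i : option 'I_n) with
  | Some a, Some b =>
    if (i == 0) then p else
    if p b == None then relabel (swapv a b) p
    else if p b == Some a then                           (* case (1): v_k -> v_i -> v_{i+1} *)
      [ffun x => if x == b then p a else if x == a then Some b else p x]
    else if p a == Some b then                           (* case (2): v_k -> v_{i+1} -> v_i *)
      [ffun x => if x == a then p b else if x == b then p b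
                 else omap (swapv a b) (p x)]
    else if p a == p b then                              (* case (3): same parent v_k *)
      [ffun x => if x == b then Some a else if x == a then p a
                 else omap (swapv a b) (p x)]
    else relabel (swapv a b) p
  | _, _ => p
  end.

Definition delta (n : nat) (p : ptree n) : ptree n :=
  foldr (@sigma n) p (iota 1 n.-1).

Definition tplus (n : nat) (p : ptree n) : ptree n :=
  [ffun x => omap (@ordS n) (p (@ord_pred n x))].

From mathcomp Require Import all_boot zify.
Set Implicit Arguments. Unset Strict Implicit. Unset Printing Implicit Defensive.

(* Each sigma_i is the exchange of the labels i and i+1 composed with a change of
   shape [sigma_shape] that commutes with every injective relabelling.  Following
   v_n through sigma_{n-1}, ..., sigma_{m+1}, the result is T with v_n relabelled
   m+1 and the labels m+1, ..., n-1 shifted up by one, except that the children x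
   of v_n and of its parent v_k for which exactly one of the labels of x and v_k is
   at most m have been exchanged between v_n and v_k [partial_shape].  For m = 0
   no child is exchanged, so delta_n T = T^+.  Conjugating sigma_i by the shift
   T |-> T^+ gives sigma_{i+1}, whence the commutation relation. *)

Section Relabelling.

Variable n : nat.
Implicit Types (p q r s t : ptree n) (f g : 'I_n -> 'I_n) (u w x y : 'I_n).

Definition relabelled f s q := forall x, q (f x) = omap f (s x).

Lemma relabelled_comp f g s q r :
  relabelled f s q -> relabelled g q r -> relabelled (g \o f) s r.
Proof. by move=> fsq gqr x; rewrite /= gqr fsq omap_comp. Qed.

Lemma eq_relabelled f g s q : f =1 g -> relabelled f s q -> relabelled g s q.
Proof. by move=> fg fsq x; rewrite -fg fsq (eq_omap fg). Qed.

Lemma relabelled_uniq f g s q r :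
  cancel g f -> relabelled f s q -> relabelled f s r -> q = r.
Proof. by move=> gK fsq fsr; apply/ffunP=> y; rewrite -(gK y) fsq fsr. Qed.

Lemma tplus_relabelled p : relabelled (@ordS n) p (tplus p).
Proof. by move=> x; rewrite ffunE ordSK. Qed.

Lemma swapvK u w : involutive (swapv u w).
Proof.
move=> x; rewrite /swapv; case: (eqVneq x u) => [->|xu]; first by rewrite eqxx; case: eqVneq.
by case: (eqVneq x w) => [->|xw]; rewrite ?eqxx // (negbTE xu) (negbTE xw).
Qed.

Lemma swapvL u w : swapv u w u = w.
Proof. by rewrite /swapv eqxx. Qed.

Lemma swapvR u w : swapv u w w = u.
Proof. by rewrite /swapv eqxx; case: eqVneq. Qed.

Lemma swapv_id u w x : x != u -> x != w -> swapv u w x = x.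
Proof. by rewrite /swapv => /negbTE-> /negbTE->. Qed.

Lemma omap_swapv_id u w o : o != Some u -> o != Some w -> omap (swapv u w) o = o.
Proof. by case: o => //= x xu xw; rewrite swapv_id //; apply: contraNneq xu => ->. Qed.

Lemma map_swapv f u w x : injective f -> f (swapv u w x) = swapv (f u) (f w) (f x).
Proof. by move=> f_inj; rewrite /swapv !(inj_eq f_inj); case: ifP => //; case: ifP. Qed.

Definition climb p k x := iter k (obind p) (Some x).

Definition acyclic p := forall x, exists k, climb p k x = None.

Definition short_cycle_free p := forall x y, p x = Some y -> p y != Some x.

Lemma acyclic_short_cycle_free p : acyclic p -> short_cycle_free p.
Proof.
move=> p_acyc x y pxy; apply/eqP=> pyx.
have climb_xy k : climb p k x \in [:: Some x; Some y].
  elim: k => [|k IHk]; first by rewrite inE eqxx.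
  by move: IHk; rewrite /climb !inE /= => /orP[] /eqP->; rewrite /= ?pxy ?pyx eqxx ?orbT.
by have [k pk] := p_acyc x; move: (climb_xy k); rewrite pk.
Qed.

Lemma short_cycle_free_loopless p x : short_cycle_free p -> p x != Some x.
Proof. by move=> p_scf; apply/eqP=> pxx; move: (p_scf _ _ pxx); rewrite pxx eqxx. Qed.

Lemma climbD p j k x : climb p (j + k) x = iter j (obind p) (climb p k x).
Proof. exact: iterD. Qed.

Lemma acyclic_simulation s t : acyclic s ->
  (forall x, exists j m, 0 < m /\ climb t j x = climb s m x) -> acyclic t.
Proof.
move=> s_acyc t_sim x; have [k sk] := s_acyc x.
elim/ltn_ind: k x sk => k IHk x sk.
have [j [m [m_gt0 tj]]] := t_sim x.
case: (leqP k m) => [km|mk].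
  by exists j; rewrite tj -(subnK km) climbD sk; elim: (m - k) => //= l ->.
case sm: (climb s m x) => [y|]; last by exists j; rewrite tj.
have sy : climb s (k - m) y = None.
  by move: sk; rewrite -{1}(subnK (ltnW mk)) climbD sm.
have [|l tl] := IHk (k - m) _ y sy; first by lia.
by exists (l + j); rewrite climbD tj sm.
Qed.

Lemma acyclic_relabelled f g s q :
  cancel g f -> relabelled f s q -> acyclic s -> acyclic q.
Proof.
move=> gK fsq s_acyc y.
have climbE k x : climb q k (f x) = omap f (climb s k x).
  by elim: k => //= k ->; case: (climb s k x) => //= z; rewrite fsq.
by have [k sk] := s_acyc (g y); exists k; rewrite -(gK y) climbE sk.
Qed.

(* u, w stand for v_i, v_{i+1}; cases (1), (2), (3) become: u and w exchange
   their children, u moves up beside w, u moves down under w. *)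
Definition sigma_shape u w s : ptree n :=
  [ffun x =>
     if s w == None then s x
     else if s w == Some u then (if x == w then s x else omap (swapv u w) (s x))
     else if s u == Some w then (if x == u then s w else s x)
     else if s u == s w then (if x == u then Some w else s x)
     else s x].

Lemma acyclic_sigma_shape u w s : u != w -> acyclic s -> acyclic (sigma_shape u w s).
Proof.
move=> uw s_acyc; apply: acyclic_simulation s_acyc _ => x.
set t := sigma_shape u w s.
have tE : t x = _ := ffunE _ x.
have same : t x = s x -> exists j m, 0 < m /\ climb t j x = climb s m x.
  by move=> txE; exists 1, 1; rewrite /climb /= txE.
have wu : (w == u) = false by rewrite eq_sym (negbTE uw).
case: (eqVneq (s w) None) tE => [sw0|sw0] /= tE; first exact: same tE.
case: (eqVneq (s w) (Some u)) tE => [swu|swu] /= tE.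
  case: (eqVneq x w) tE => [xw|xw] /= tE; first exact: same tE.
  case: (eqVneq (s x) (Some u)) tE => [sxu|sxu] tE.
    by exists 2, 1; rewrite /climb /= tE sxu /= swapvL /t /sigma_shape ffunE swu !eqxx.
  case: (eqVneq (s x) (Some w)) tE => [sxw|sxw] tE.
    by exists 1, 2; rewrite /climb /= tE sxw /= swapvR swu.
  by apply: same; rewrite tE omap_swapv_id.
case: (eqVneq (s u) (Some w)) tE => [suw|suw] /= tE.
  case: (eqVneq x u) tE => [->|xu] /= tE; last exact: same tE.
  by exists 1, 2; rewrite /climb /= tE suw.
case: (eqVneq (s u) (s w)) tE => [susw|susw] /= tE; last exact: same tE.
case: (eqVneq x u) tE => [->|xu] /= tE; last exact: same tE.
exists 2, 1; rewrite /climb /= tE /= /t /sigma_shape ffunE.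
by rewrite (negbTE sw0) (negbTE swu) (negbTE suw) susw eqxx wu.
Qed.

Lemma sigma_shape_relabelled f u w s q : injective f -> relabelled f s q ->
  relabelled f (sigma_shape u w s) (sigma_shape (f u) (f w) q).
Proof.
move=> f_inj fsq x; rewrite !ffunE !fsq.
have omap_eq o o' : (omap f o == omap f o') = (o == o') := inj_eq (inj_omap f_inj) o o'.
rewrite -[None]/(omap f None) -[Some (f u)]/(omap f (Some u)).
rewrite -[Some (f w)]/(omap f (Some w)) !omap_eq !(inj_eq f_inj) /=.
by repeat case: ifP => // _; case: (s x) => //= y; rewrite map_swapv.
Qed.

Lemma sigma_swap_shape i a b q : 0 < i -> val a = i.-1 -> val b = i ->
  q b != Some b -> relabelled (swapv a b) (sigma_shape a b q) (sigma i q).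
Proof.
move=> i_gt0 va vb qbb x.
have ab : a != b by apply/eqP=> eab; move: va; rewrite eab vb; lia.
have ba : b != a by rewrite eq_sym.
have swapK := omapK (swapvK a b).
rewrite /sigma (negbTE (lt0n_neq0 i_gt0)) -va -vb !valK !ffunE.
case: (eqVneq (q b) None) => [qb0|qb0] /=; first by rewrite ffunE swapvK.
case: (eqVneq (q b) (Some a)) => [qba|qba] /=; last
  case: (eqVneq (q a) (Some b)) => [qab|qab] /=; last
  case: (eqVneq (q a) (q b)) => [qaqb|qaqb] /=.
all: rewrite !ffunE ?swapvK.
all: case: (eqVneq x a) => [->|xa]; [|case: (eqVneq x b) => [->|xb]].
all: rewrite ?swapvL ?swapvR ?swapv_id //= ?eqxx ?(negbTE ab) ?(negbTE ba).
all: rewrite ?(negbTE xa) ?(negbTE xb) ?swapK //.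
all: first [by rewrite qba /= swapvL | by rewrite /= swapvR | by rewrite ?qaqb omap_swapv_id].
Qed.

Lemma sigma_relabelled i f u w s q : 0 < i -> injective f ->
  val (f u) = i.-1 -> val (f w) = i -> s w != Some w -> relabelled f s q ->
  relabelled (swapv (f u) (f w) \o f) (sigma_shape u w s) (sigma i q).
Proof.
move=> i_gt0 f_inj fu fw sww fsq.
apply: relabelled_comp (sigma_shape_relabelled _ _ f_inj fsq) (sigma_swap_shape _ _ _ _) => //.
by rewrite fsq -[Some (f w)]/(omap f (Some w)) (inj_eq (inj_omap f_inj)).
Qed.

Lemma acyclic_sigma i p : 0 < i < n -> acyclic p -> acyclic (sigma i p).
Proof.
move=> /andP[i_gt0 i_lt] p_acyc.
have ia : i.-1 < n by lia.
pose a := Ordinal ia; pose b := Ordinal i_lt.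
have ab : a != b by rewrite -(inj_eq val_inj) /=; lia.
have pbb := short_cycle_free_loopless b (acyclic_short_cycle_free p_acyc).
apply: acyclic_relabelled (swapvK a b) (sigma_swap_shape i_gt0 _ _ pbb) _ => //.
exact: acyclic_sigma_shape.
Qed.

Lemma tplus_sigma i p : 0 < i -> i.+1 < n -> short_cycle_free p ->
  tplus (sigma i p) = sigma i.+1 (tplus p).
Proof.
move=> i_gt0 i_lt p_scf.
have ia : i.-1 < n by lia.
have ib : i < n by lia.
pose a := Ordinal ia; pose b := Ordinal ib.
have pbb := short_cycle_free_loopless b p_scf.
have lhs_relabelled := relabelled_comp
  (sigma_swap_shape (a := a) (b := b) i_gt0 erefl erefl pbb) (tplus_relabelled (sigma i p)).
have Sa : val (ordS a) = i.+1.-1 by rewrite /= prednK // modn_small.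
have Sb : val (ordS b) = i.+1 by rewrite /= modn_small.
have rhs_relabelled := sigma_relabelled (ltn0Sn i) (@ordS_inj n) Sa Sb pbb (tplus_relabelled p).
have shiftK : cancel (swapv a b \o @ord_pred n) (@ordS n \o swapv a b).
  by move=> y; rewrite /= swapvK ord_predK.
apply: relabelled_uniq shiftK lhs_relabelled (eq_relabelled _ rhs_relabelled) => x.
by rewrite /= map_swapv //; exact: ordS_inj.
Qed.

End Relabelling.

Section Delta.

Variables (n : nat) (p : ptree n.+1).
Hypothesis p_scf : short_cycle_free p.
Local Notation vmax := (@ord_max n).

Lemma ltn_neq_max (x : 'I_n.+1) : x != vmax -> x < n.
Proof. by rewrite -(inj_eq val_inj) ltn_neqAle -ltnS ltn_ord andbT. Qed.

Lemma inord_neq_max m : m < n -> inord m != vmax.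
Proof. by move=> mn; rewrite -(inj_eq (@ord_inj _)) inordK /=; lia. Qed.

Definition insert_max (m : nat) (x : 'I_n.+1) : 'I_n.+1 :=
  inord (if x == vmax then m else bump m x).

Lemma val_insert_max m x : m <= n ->
  nat_of_ord (insert_max m x) = if x == vmax then m else bump m x.
Proof.
move=> mn; rewrite /insert_max inordK //.
case: eqVneq => [_|/ltn_neq_max xn]; first by rewrite ltnS.
by rewrite /bump; case: leqP; lia.
Qed.

Lemma insert_max_inj m : m <= n -> injective (insert_max m).
Proof.
move=> mn x y /(congr1 (@nat_of_ord _)); rewrite !val_insert_max //.
case: (eqVneq x vmax) => [->|_]; case: (eqVneq y vmax) => [->|_] //.
- by move/eqP; rewrite (negbTE (neq_bump _ _)).
- by move/esym/eqP; rewrite (negbTE (neq_bump _ _)).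
- by move/(can_inj (bumpK m))/ord_inj.
Qed.

Lemma insert_max_top x : insert_max n x = x.
Proof.
apply: ord_inj; rewrite val_insert_max //.
by case: (eqVneq x vmax) => [->|/ltn_neq_max xn] //; rewrite /bump leqNgt xn.
Qed.

Lemma insert_max0 x : insert_max 0 x = ordS x.
Proof.
apply: ord_inj; rewrite val_insert_max //= /bump leq0n add1n.
by case: (eqVneq x vmax) => [->|/ltn_neq_max xn]; rewrite ?modnn // modn_small.
Qed.

Lemma swapv_insert_max m x : m < n ->
  swapv (inord m) (inord m.+1) (insert_max m.+1 x) = insert_max m x.
Proof.
move=> mn; rewrite /insert_max.
case: (eqVneq x vmax) => [_|/ltn_neq_max xn]; first by rewrite swapvR.
have [xm|xm] := eqVneq (nat_of_ord x) m.
  by rewrite xm /bump ltnn leqnn add1n swapvL.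
have bump_x : bump m.+1 x = bump m x.
  by rewrite /bump [m < x]ltn_neqAle eq_sym xm.
rewrite bump_x swapv_id //; apply/eqP=> /(congr1 (@nat_of_ord _));
  rewrite !inordK /bump; case: leqP; lia.
Qed.

Definition partial_shape m : ptree n.+1 :=
  [ffun x => if p vmax is Some k then
               if (x != vmax) && ((x < m) != (k < m)) then omap (swapv k vmax) (p x)
               else p x
             else p x].

Lemma parent_max_neq k : p vmax = Some k -> k != vmax.
Proof.
by move=> pw; apply/eqP=> kw; move: (short_cycle_free_loopless vmax p_scf); rewrite pw kw eqxx.
Qed.

Lemma partial_shape_max m : partial_shape m vmax = p vmax.
Proof. by rewrite ffunE eqxx /=; case: (p vmax). Qed.

Lemma partial_shape0 : partial_shape 0 = p.
Proof. by apply/ffunP=> x; rewrite ffunE; case: (p vmax) => // k; rewrite !ltn0 andbF. Qed.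

Lemma partial_shape_top : partial_shape n = p.
Proof.
apply/ffunP=> x; rewrite ffunE; case pw: (p vmax) => [k|] //.
have /ltn_neq_max kn := parent_max_neq pw.
by case: (eqVneq x vmax) => [->|/ltn_neq_max xn] //=; rewrite xn kn.
Qed.

Lemma sigma_shape_partial m : m < n ->
  sigma_shape (inord m) vmax (partial_shape m.+1) = partial_shape m.
Proof.
move=> mn; set u : 'I_n.+1 := inord m.
have vu : nat_of_ord u = m by rewrite inordK // ltnS ltnW.
have uw : u != vmax := inord_neq_max mn.
apply/ffunP=> x; rewrite [LHS]ffunE !partial_shape_max.
case pw: (p vmax) => [k|]; last by rewrite !ffunE pw.
have kw := parent_max_neq pw.
have [ku|ku] := eqVneq k u.
  rewrite ku eqxx /= !ffunE pw ku vu ltnn ltnSn.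
  case: (eqVneq x vmax) => [->|xw] //=.
  rewrite ltnS leq_eqVlt; case: (eqVneq (nat_of_ord x) m) => [xm|xm] /=.
    have -> : x = u by apply: ord_inj; rewrite vu.
    rewrite omap_swapv_id ?if_same // ?short_cycle_free_loopless //.
    by rewrite -ku; exact: p_scf pw.
  by case: (x < m); rewrite /= ?(omapK (swapvK _ _)).
have ltnS_neq (y : 'I_n.+1) : y != u -> (y < m.+1) = (y < m).
  move=> yu; rewrite ltnS leq_eqVlt -vu.
  by rewrite (inj_eq (@ord_inj _)) (negbTE yu).
have S'E y : y != u -> partial_shape m.+1 y = partial_shape m y.
  by move=> yu; rewrite !ffunE pw !ltnS_neq.
rewrite /= -[Some k == Some u]/(k == u) (negbTE ku).
case: (eqVneq x u) => [->|xu]; last by rewrite /= !if_same S'E.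
rewrite !ffunE pw vu ltnn ltnSn (negbTE uw) /= ltnS_neq //.
have wk : vmax != k by rewrite eq_sym.
case: (p u) => [y|]; last by rewrite !if_same.
case: (k < m) => /=; rewrite !(inj_eq (@Some_inj _)).
all: have [->|yk] := eqVneq y k; [|have [->|yw] := eqVneq y vmax].
all: rewrite ?swapvL ?swapvR ?swapv_id ?eqxx //.
all: by rewrite ?(negbTE kw) ?(negbTE wk) ?(negbTE yk) ?(negbTE yw).
Qed.

Lemma foldr_sigma_relabelled d m : m + d = n ->
  relabelled (insert_max m) (partial_shape m) (foldr (@sigma n.+1) p (iota m.+1 d)).
Proof.
elim: d m => [|d IHd] m mdn.
  rewrite addn0 in mdn; rewrite mdn partial_shape_top => x /=.
  by rewrite insert_max_top (eq_omap insert_max_top) omap_id.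
have mn : m < n by lia.
have Iu : insert_max m.+1 (inord m) = inord m.
  apply: ord_inj; rewrite val_insert_max // (negbTE (inord_neq_max mn)).
  by rewrite /bump inordK ?ltnn; lia.
have Iw : insert_max m.+1 vmax = inord m.+1 by rewrite /insert_max eqxx.
have fu : nat_of_ord (insert_max m.+1 (inord m)) = m.+1.-1 by rewrite Iu inordK //; lia.
have fw : nat_of_ord (insert_max m.+1 vmax) = m.+1 by rewrite Iw inordK.
have wmax := short_cycle_free_loopless vmax p_scf.
have mdn' : m.+1 + d = n by rewrite addSnnS.
have := sigma_relabelled (ltn0Sn m) (insert_max_inj mn) fu fw _ (IHd m.+1 mdn').
rewrite partial_shape_max sigma_shape_partial // Iu Iw => /(_ wmax).
by apply: eq_relabelled => x; rewrite /= swapv_insert_max.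
Qed.

Lemma delta_relabelled : relabelled (@ordS n.+1) p (delta p).
Proof.
have := foldr_sigma_relabelled (add0n n); rewrite partial_shape0.
exact: eq_relabelled insert_max0.
Qed.

End Delta.

Lemma delta_tplus n (p : ptree n) : short_cycle_free p -> delta p = tplus p.
Proof.
case: n p => [|n] p p_scf; first by apply/ffunP; case.
exact: relabelled_uniq (@ord_predK n.+1) (delta_relabelled p_scf) (tplus_relabelled p).
Qed.

Unset Implicit Arguments.

Theorem proposition1p3 (n : nat) (p : ptree n) :
  1 < n -> is_rooted_tree p ->
  delta p = tplus p /\
  (forall i : nat, 1 <= i <= n - 2 ->
     delta (sigma i p) = sigma i.+1 (delta p)).
Proof.
move=> n_gt1 [_ p_acyc].
have p_scf := acyclic_short_cycle_free p_acyc.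
split=> [|i /andP[i_gt0 i_le]]; first exact: delta_tplus.
have i_lt : 0 < i < n by apply/andP; split; lia.
rewrite !delta_tplus //; last exact/acyclic_short_cycle_free/acyclic_sigma.
by apply: tplus_sigma => //; lia.
Qed.
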